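(* Let $G=(V,E)$ be a connected graph, let $T$ be a spanning tree of $G$ rooted in $s$ which is an $\mathcal L$-tree of LexDFS on $G$, and let $\sigma$ be a vertex order of $G$ starting at $s$ whose $\mathcal L$-tree is $T$. Then Ordering$(G,T,s,\sigma^-)$ outputs $\sigma$ if and only if $\sigma$ is a LexDFS order of $G$.
   Context: Graphs are finite, simple, undirected; $N(v)$ is the neighborhood of $v$. A vertex order is a linear order $\sigma=(v_1,\dots,v_n)$ of $V$; $\sigma(i)=v_i$; $u\prec_\sigma v$ means $u$ appears before $v$; $\sigma^-$ is the reverse order. DFS: a search that starts at a vertex and repeatedly visits an unvisited neighbor of the most recently visited vertex that still has an unvisited neighbor. DFS$^+(\tau)$ on a graph $H$: the DFS of $H$ starting at the last vertex of $\tau$ that, whenever several vertices may be visited next, visits the one rightmost in $\tau$. LexDFS started at $s$: label $s$ with $(0)$, all others with the empty label; for $i=1,\dots,n$ pick an unnumbered vertex $v$ with lexicographically largest label, set $\sigma(i)=v$, prepend $i$ to the label of each unnumbered neighbor of $v$; a LexDFS order is any possible output. $\mathcal L$-tree of a vertex order $(v_1,\dots,v_n)$: the spanning tree rooted at $v_1$ with an edge from each $v_i$ ($i>1$) to its rightmost neighbor $v_j$ with $j<i$; a rooted spanning tree $T$ (root $s$) is an $\mathcal L$-tree of LexDFS on $G$ if some LexDFS order of $G$ starting at $s$ has $\mathcal L$-tree $T$. Refining an ordered partition $(Q_1,\dots,Q_k)$ of $V$ with $S'$ replaces each $Q_i$ by $(Q_i\cap S',Q_i\setminus S')$ whenever both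 are nonempty. Procedure Ordering$(G,T,s,\rho)$ (for $\rho$ ending with $s$): let $\beta$ be the reverse of a BFS order of $T$ starting at $s$; $\mathcal Q=(V)$; for $i=1,\dots,n$, with $v=\beta(i)$, refine $\mathcal Q$ with $\{w\in N(v): w\prec_\beta v\}$; order the vertices inside each class of $\mathcal Q$ according to $\rho^-$ and move $\{s\}$ to the leftmost position; let $\tau$ be the reverse of the resulting order of all vertices; output DFS$^+(\tau)$ on $T$. *)

From mathcomp Require Import all_boot.
Set Implicit Arguments. Unset Strict Implicit. Unset Printing Implicit Defensive.

Section Defs.
Variable V : finType.

Definition simple_graph (e : rel V) : Prop := symmetric e /\ irreflexive e.

Definition connected_graph (e : rel V) : Prop := forall x y : V, connect e x y.

Definition vertex_order (s : seq V) : bool := uniq s && all (mem s) (enum V).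

Fixpoint lex_le (a b : seq nat) : bool :=
  match a, b with
  | [::], _ => true
  | _ :: _, [::] => false
  | x :: a', y :: b' => (x < y) || ((x == y) && lex_le a' b')
  end.

(* LexDFS label of w just before step i+1 (0-indexed: before the (i)-th
   vertex of sigma is numbered): the numbers j+1 of the already numbered
   neighbours sigma(j), most recent first, followed by the initial label
   (0) if w = s. *)
Definition lexdfs_label (e : rel V) (s : V) (sigma : seq V) (i : nat) (w : V)
  : seq nat :=
  rev [seq j.+1 | j <- iota 0 i & e (nth s sigma j) w]
  ++ (if w == s then [:: 0] else [::]).

Definition lexdfs_order (e : rel V) (s : V) (sigma : seq V) : Prop :=
  vertex_order sigma /\
  forall i, i < size sigma ->
    forall w, w \in drop i sigma ->
      lex_le (lexdfs_label e s sigma i w) (lexdfs_label e s sigma i (nth s sigma i)).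

(* L-tree of a vertex order sigma: each non-first vertex is joined to its
   rightmost earlier neighbour. *)
Definition earlier_nbrs (e : rel V) (sigma : seq V) (v : V) : seq V :=
  [seq u <- take (index v sigma) sigma | e u v].

Definition lparent (e : rel V) (sigma : seq V) (v p : V) : bool :=
  (earlier_nbrs e sigma v != [::]) && (p == last p (earlier_nbrs e sigma v)).

Definition ltree_rel (e : rel V) (sigma : seq V) : rel V :=
  fun x y => lparent e sigma y x || lparent e sigma x y.

Definition ltree_of (e : rel V) (sigma : seq V) (t : rel V) : Prop :=
  (forall v, v \in behead sigma -> earlier_nbrs e sigma v != [::]) /\
  (forall x y, t x y = ltree_rel e sigma x y).

Definition is_lexdfs_ltree (e : rel V) (t : rel V) (s : V) : Prop :=
  exists tau, lexdfs_order e s tau /\ ltree_of e tau t.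

(* beta is a BFS order of the graph h starting at s: each next vertex is a
   neighbour of the earliest visited vertex that still has an unvisited
   neighbour. *)
Definition bfs_order (h : rel V) (s : V) (beta : seq V) : Prop :=
  [/\ vertex_order beta, head s beta = s &
   forall i, 0 < i < size beta ->
     let vis := take i beta in
     let j := find (fun u => has (fun w => h u w && (w \notin vis)) (enum V)) vis in
     j < i /\ h (nth s beta j) (nth s beta i)].

(* pi = DFS^+(tau) on h: starts at the last vertex of tau; the next vertex is
   the rightmost (in tau) unvisited neighbour of the most recently visited
   vertex that still has an unvisited neighbour. *)
Definition dfs_plus (h : rel V) (tau pi : seq V) : Prop :=
  exists x0 : V,
  [/\ vertex_order pi, head x0 pi = last x0 tau &
   forall i, 0 < i < size pi ->
     let vis := take i pi in
     let unv := fun u w => h u w && (w \notin vis) in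
     exists2 j, j < i &
       [/\ has (unv (nth x0 pi j)) (enum V),
           forall k, j < k < i -> ~~ has (unv (nth x0 pi k)) (enum V),
           unv (nth x0 pi j) (nth x0 pi i) &
           forall w, unv (nth x0 pi j) w -> index w tau <= index (nth x0 pi i) tau]].

Definition refine (Q : seq (seq V)) (S : pred V) : seq (seq V) :=
  flatten [seq if has S q && has (predC S) q then [:: filter S q; filter (predC S) q]
               else [:: q] | q <- Q].

(* the partition computed by Ordering, with beta the reverse of a BFS order
   of the tree *)
Definition ordering_partition (e : rel V) (beta : seq V) : seq (seq V) :=
  foldl (fun Q v => refine Q [pred w | e v w & index w beta < index v beta])
        [:: enum V] beta.

Definition ordering_tau (e : rel V) (s : V) (rho bfs : seq V) : seq V :=
  let beta := rev bfs in
  let Q := ordering_partition e beta in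
  let ord_in := fun x y => index x (rev rho) <= index y (rev rho) in
  let L := flatten [seq sort ord_in q | q <- Q] in
  rev (s :: rem s L).

Definition ordering_outputs (e t : rel V) (s : V) (rho bfs pi : seq V) : Prop :=
  dfs_plus t (ordering_tau e s rho bfs) pi.

End Defs.

(* sigma and the LexDFS order tau0 both have L-tree T, so they induce the same
   parent function, and since tau0 is a LexDFS order every edge of G joins a
   vertex to one of its T-ancestors.  Hence, for a child c of u that is not yet
   numbered, the LexDFS label of c is governed by the neighbours of c on the
   root-to-u path of T: two such siblings compare like their adjacencies to that
   path read from u upwards ([path_beats]), and every descendant of c has a label
   at most that of c.  The refinement of Ordering, processing the vertices in
   reverse BFS order of T, sorts siblings by exactly this comparison, with ties
   broken by sigma.  So at each step DFS^+ on T picks, among the unvisited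
   children of the last vertex with an unvisited tree neighbour, the one of
   largest label; and a LexDFS step always numbers such a child, because the
   parent of the new vertex is the last numbered vertex with an unnumbered
   neighbour.  The two rules therefore agree step by step. *)

From mathcomp Require Import all_boot zify.
Set Implicit Arguments. Unset Strict Implicit. Unset Printing Implicit Defensive.

Lemma pairwise_index (T : eqType) (r : rel T) (l : seq T) x y :
  pairwise r l -> x \in l -> y \in l -> index x l < index y l -> r x y.
Proof.
move=> /(pairwiseP x) r_l xl yl lt_xy.
by rewrite -(nth_index x xl) -(nth_index x yl) r_l ?inE ?index_mem.
Qed.

Lemma pairwise_rev (T : Type) (r : rel T) (l : seq T) :
  pairwise r (rev l) = pairwise (fun x y => r y x) l.
Proof.
elim: l => //= x l IH; rewrite rev_cons -cats1 pairwise_cat IH /= andbT.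
by rewrite allrel1r all_rev andbC.
Qed.

Lemma index_rev_uniq (T : eqType) (l : seq T) x :
  uniq l -> x \in l -> index x (rev l) = size l - (index x l).+1.
Proof.
move=> ul xl; have il : index x l < size l by rewrite index_mem.
have nth_k : nth x (rev l) (size l - (index x l).+1) = x.
  by rewrite nth_rev ?size_rev; [rewrite subnSK // subKn ?nth_index // ltnW | lia].
by rewrite -{1}nth_k index_uniq ?rev_uniq ?size_rev //; lia.
Qed.

Lemma index_rev_ltE (T : eqType) (l : seq T) x y :
  uniq l -> x \in l -> y \in l ->
  (index x (rev l) < index y (rev l)) = (index y l < index x l).
Proof.
move=> ul xl yl; rewrite !index_rev_uniq //.
by have := index_mem x l; have := index_mem y l; rewrite xl yl; lia.
Qed.

Lemma last_filter_nth (T : eqType) (P : pred T) (l : seq T) x0 m :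
  m < size l -> P (nth x0 l m) ->
  (forall k, m < k < size l -> ~~ P (nth x0 l k)) ->
  last x0 (filter P l) = nth x0 l m.
Proof.
move=> ml Pm notP.
rewrite -(cat_take_drop m l) (drop_nth x0 ml) filter_cat /= Pm.
have -> : filter P (drop m.+1 l) = [::].
  apply/eqP; rewrite -(negbK (_ == _)) -has_filter; apply/hasPn => y.
  case/(nthP x0) => k; rewrite size_drop nth_drop => kl <-.
  by apply: notP; lia.
by rewrite last_cat /= nth_cat size_take ml ltnn subnn.
Qed.

Lemma ex_last_below (P : pred nat) i : (exists2 j, j < i & P j) ->
  exists j, [/\ j < i, P j & forall k, j < k < i -> ~~ P k].
Proof.
case=> j0 j0i Pj0.
have exP : exists j, (j < i) && P j by exists j0; rewrite j0i.
have ub j : (j < i) && P j -> j <= i by case/andP=> /ltnW.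
have [j /andP[ji Pj] maxj] := ex_maxnP exP ub.
exists j; split=> // k /andP[jk ki]; apply/negP => Pk.
by have := maxj k; rewrite ki Pk => /(_ isT); lia.
Qed.

Lemma ex_switch (P : pred nat) n : ~~ P 0 -> P n ->
  exists k, [/\ k < n, ~~ P k & P k.+1].
Proof.
elim: n => [/negbTE->//|n IH P0 Pn].
case Pn': (P n); last by exists n; rewrite Pn'.
by have [k [kn Pk Pk1]] := IH P0 Pn'; exists k; split=> //; lia.
Qed.

Lemma path_exit_edge (T : Type) (r : rel T) (P : pred T) x p :
  P x -> ~~ P (last x p) -> path r x p -> exists u v, [/\ P u, ~~ P v & r u v].
Proof.
elim: p x => [|y p IH] x /=; first by move=> ->.
move=> Px Plast /andP[rxy path_p].
case Py: (P y); first exact: IH Py Plast path_p.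
by exists x, y; rewrite Py.
Qed.

Lemma foldl_map (T1 T2 R : Type) (f : R -> T2 -> R) (h : T1 -> T2) z (l : seq T1) :
  foldl f z (map h l) = foldl (fun z x => f z (h x)) z l.
Proof. by elim: l z => //= x l IH z. Qed.

Lemma perm_flatten_sort (T : eqType) (r : rel T) (Q : seq (seq T)) :
  perm_eq (flatten [seq sort r q | q <- Q]) (flatten Q).
Proof. by elim: Q => //= q Q IH; apply: perm_cat; rewrite ?perm_sort. Qed.

Lemma lex_le_refl a : lex_le a a.
Proof. by elim: a => //= x a ->; rewrite eqxx ltnn orbT. Qed.

Lemma lex_le_trans a b c : lex_le a b -> lex_le b c -> lex_le a c.
Proof.
elim: a b c => [|x a IH] [|y b] [|z c] //=.
case/orP=> [xy|/andP[/eqP-> ab]]; case/orP=> [yz|/andP[/eqP<- bc]].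
- by rewrite (ltn_trans xy yz).
- by rewrite xy.
- by rewrite yz.
- by rewrite eqxx (IH _ _ ab bc) orbT.
Qed.

Lemma lex_le_big_head x a b : all (leq^~ x) b -> lex_le (x.+1 :: a) b = false.
Proof. by case: b => //= y b /andP[yx _]; apply/negbTE; lia. Qed.

Section NbrLabel.
Implicit Types (P Q : pred nat) (i : nat).

Definition nbr_label P i := rev [seq j.+1 | j <- iota 0 i & P j].

Definition last_diff P Q i :=
  exists k, [/\ k < i, P k, ~~ Q k & forall l, k < l < i -> P l = Q l].

Lemma nbr_label_bound P i : all (leq^~ i) (nbr_label P i).
Proof.
rewrite all_rev; apply/allP => x /mapP[j]; rewrite mem_filter mem_iota.
by case/andP=> _ /andP[_ ji] ->.
Qed.

Lemma nbr_labelS P i :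
  nbr_label P i.+1 = if P i then i.+1 :: nbr_label P i else nbr_label P i.
Proof.
rewrite /nbr_label -{1}addn1 iotaD filter_cat map_cat rev_cat /= add0n.
by case: (P i).
Qed.

Lemma last_diffS P Q i :
  last_diff P Q i.+1 <-> (P i && ~~ Q i) \/ (P i = Q i /\ last_diff P Q i).
Proof.
split=> [[k [ki Pk Qk agree]]|[/andP[Pi Qi]|[PQi [k [ki Pk Qk agree]]]]].
- have [<- | ne] := eqVneq k i; first by left; rewrite Pk Qk.
  right; split; first by apply: agree; lia.
  by exists k; split=> [||//|l kli]; [lia | by [] | apply: agree; lia].
- by exists i; split=> // l; lia.
- exists k; split=> // [|l /andP[kl li]]; first lia.
  by have [-> // | ne] := eqVneq l i; apply: agree; lia.
Qed.

Lemma lex_le_nbr_label P Q i :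
  lex_le (nbr_label P i) (nbr_label Q i) <-> ~ last_diff P Q i.
Proof.
elim: i => [|i IH]; first by split=> // _ [k []].
have boundP := nbr_label_bound P i; have boundQ := nbr_label_bound Q i.
rewrite last_diffS !nbr_labelS; case: (P i); case: (Q i).
- rewrite /= ltnn eqxx IH; split=> [H [//|[_ /H]]|H D] //; exact: H (or_intror _).
- by rewrite lex_le_big_head //; split=> // /(_ (or_introl isT)).
- split=> [_ [//|[]//] | _].
  by case: (nbr_label P i) boundP => //= y a /andP[yi _]; rewrite ltnS yi.
- rewrite IH; split=> [H [//|[_ /H]]|H D] //; exact: H (or_intror _).
Qed.

End NbrLabel.

Section Signatures.
Variable V : finType.
Implicit Types (Ss : seq (pred V)) (A : pred V) (x y : V).

(* Membership in a refining set counts as smaller, since [refine] puts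
   [q :&: A] before [q :\: A]. *)
Fixpoint sig_lt Ss x y : bool :=
  if Ss is A :: Ss' then (A x && ~~ A y) || ((A x == A y) && sig_lt Ss' x y)
  else false.

Definition sig_eq Ss x y := all (fun A : pred V => A x == A y) Ss.

Lemma sig_lt_rcons Ss A x y :
  sig_lt (rcons Ss A) x y = sig_lt Ss x y || [&& sig_eq Ss x y, A x & ~~ A y].
Proof.
elim: Ss => [|A' Ss IH] /=; first by case: (A x) (A y) => [] [].
by rewrite IH /sig_eq /=; case: (A' x) (A' y) => [] [].
Qed.

Lemma sig_eq_rcons Ss A x y : sig_eq (rcons Ss A) x y = sig_eq Ss x y && (A x == A y).
Proof. by rewrite /sig_eq all_rcons andbC. Qed.

Lemma sig_eq_sym Ss x y : sig_eq Ss x y = sig_eq Ss y x.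
Proof. by apply: eq_all => A; rewrite eq_sym. Qed.

Lemma sig_lt_asym Ss x y : sig_lt Ss x y -> sig_lt Ss y x = false.
Proof. by elim: Ss => //= A Ss IH; case: (A x) (A y) => [] []. Qed.

Lemma sig_lt_neq Ss x y : sig_lt Ss x y -> sig_eq Ss x y = false.
Proof. by elim: Ss => //= A Ss IH; case: (A x) (A y) => [] []. Qed.

Lemma sig_leNlt Ss x y : (sig_lt Ss y x || sig_eq Ss y x) = ~~ sig_lt Ss x y.
Proof.
case lt_xy: (sig_lt Ss x y) => /=.
  by rewrite (sig_lt_asym lt_xy) sig_eq_sym (sig_lt_neq lt_xy).
elim: Ss lt_xy => //= A Ss IH; case: (A x) (A y) => [] [] //= /IH.
Qed.

Lemma sig_lt_mapP (F : V -> pred V) (l : seq V) x y :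
  sig_lt (map F l) x y <->
  exists v, [/\ v \in l, F v x, ~~ F v y &
    forall v', v' \in l -> index v' l < index v l -> F v' x = F v' y].
Proof.
elim: l => [|a l IH] /=; first by split=> // [[v []]].
split.
  case/orP=> [/andP[Fx Fy]|/andP[/eqP E /IH [v [vl Fvx Fvy agree]]]].
    by exists a; rewrite inE eqxx; split=> // v'; rewrite /= eqxx.
  have va : v != a by apply: contraNneq Fvy => va; rewrite va -E -va.
  exists v; split=> [||//|v']; [by rewrite inE vl orbT | by [] |].
  rewrite inE /= [a == v]eq_sym (negbTE va).
  by case: (eqVneq a v') => [<- //|_] /= v'l; rewrite ltnS; exact: agree.
case=> v [vl Fx Fy agree].
have [->|av] := eqVneq a v; first by rewrite Fx Fy.
have E : F a x = F a y by apply: agree; rewrite /= ?inE eqxx // (negbTE av).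
apply/orP; right; rewrite E eqxx /=; apply/IH.
move: vl; rewrite inE eq_sym (negbTE av) /= => vl.
exists v; split=> // v' v'l lt_v'v.
have [<- //|av'] := eqVneq a v'.
by apply: agree; rewrite /= ?inE ?v'l ?orbT // (negbTE av) (negbTE av').
Qed.

Fixpoint sig_sorted Ss (Q : seq (seq V)) : Prop :=
  if Q is q :: Q' then
    [/\ {in q &, forall x y, sig_eq Ss x y},
        {in q, forall x, {in flatten Q', forall y, sig_lt Ss x y}} &
        sig_sorted Ss Q']
  else True.

Lemma refine_cons q Q A :
  refine (q :: Q) A =
  (if has A q && has (predC A) q then [:: filter A q; filter (predC A) q] else [:: q])
  ++ refine Q A.
Proof. by []. Qed.

Lemma perm_refine Q A : perm_eq (flatten (refine Q A)) (flatten Q).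
Proof.
elim: Q => //= q Q IH; rewrite refine_cons flatten_cat /=.
by case: ifP => _ /=; rewrite ?cats0; apply: perm_cat; rewrite ?perm_filterC.
Qed.

Lemma sig_sorted_refine Ss Q A : sig_sorted Ss Q -> sig_sorted (rcons Ss A) (refine Q A).
Proof.
elim: Q => //= q Q IH [eq_q lt_q sorted_Q]; rewrite refine_cons.
have memR : flatten (refine Q A) =i flatten Q := perm_mem (perm_refine Q A).
have lt_rest x y : x \in q -> y \in flatten (refine Q A) -> sig_lt (rcons Ss A) x y.
  by move=> xq; rewrite memR => yQ; rewrite sig_lt_rcons lt_q.
case: ifP => split_q /=.
  split; last split; rewrite ?cats0 //.
  - move=> x y; rewrite !mem_filter => /andP[Ax xq] /andP[Ay yq].
    by rewrite sig_eq_rcons eq_q // Ax Ay.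
  - move=> x; rewrite mem_filter => /andP[Ax xq] y; rewrite mem_cat mem_filter.
    case/orP=> [/andP[/= Ay yq]|]; last exact: lt_rest.
    by rewrite sig_lt_rcons eq_q // Ax Ay orbT.
  - move=> x y; rewrite !mem_filter => /andP[Ax xq] /andP[Ay yq].
    by rewrite sig_eq_rcons eq_q //= (negbTE Ax) (negbTE Ay).
  - by move=> x; rewrite mem_filter => /andP[_ /lt_rest].
  - exact: IH.
split=> [x y xq yq||]; last exact: IH; last by move=> x /lt_rest.
rewrite sig_eq_rcons eq_q //=.
move/negbT: split_q; rewrite negb_and => /orP[] /hasPn A_q.
  by rewrite (negbTE (A_q x xq)) (negbTE (A_q y yq)).
by have := A_q x xq; have := A_q y yq => /negbNE-> /negbNE->.
Qed.

Lemma sig_sorted_foldl_refine Ss Q (Ts : seq (pred V)) :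
  sig_sorted Ss Q -> sig_sorted (Ss ++ Ts) (foldl (@refine V) Q Ts).
Proof.
elim: Ts Ss Q => [|T Ts IH] Ss Q sorted_Q /=; first by rewrite cats0.
by rewrite -cat_rcons; apply/IH/sig_sorted_refine.
Qed.

Lemma perm_foldl_refine Q (Ts : seq (pred V)) :
  perm_eq (flatten (foldl (@refine V) Q Ts)) (flatten Q).
Proof. by elim: Ts Q => //= T Ts IH Q; exact: perm_trans (IH _) (perm_refine _ _). Qed.

End Signatures.

Section OrderingTau.
Variables (V : finType) (e : rel V) (s : V) (rho bfs : seq V).
Hypothesis rho_all : forall v, v \in rho.

Let beta := rev bfs.
Let rank x := index x (rev rho).
Let ord_in x y := rank x <= rank y.

Definition ordering_sigs : seq (pred V) :=
  [seq ([pred w | e v w & index w beta < index v beta] : pred V) | v <- beta].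

Definition ordering_le x y :=
  sig_lt ordering_sigs x y || (sig_eq ordering_sigs x y && (rank x <= rank y)).

Lemma ordering_partitionE :
  ordering_partition e beta = foldl (@refine V) [:: enum V] ordering_sigs.
Proof. by rewrite /ordering_sigs foldl_map. Qed.

Lemma ordering_le_anti x y : ordering_le x y -> ordering_le y x -> x = y.
Proof.
rewrite /ordering_le => /orP[lt_xy|/andP[eq_xy le_xy]].
  by rewrite (sig_lt_asym lt_xy) sig_eq_sym (sig_lt_neq lt_xy).
case/orP=> [lt_yx|/andP[_ le_yx]]; first by rewrite sig_eq_sym (sig_lt_neq lt_yx) in eq_xy.
have rank_xy : rank x = rank y by apply/eqP; rewrite eqn_leq le_xy le_yx.
have [xr yr] : x \in rev rho /\ y \in rev rho by rewrite !mem_rev.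
by rewrite -(nth_index x xr) -(nth_index x yr); congr nth.
Qed.

Lemma pairwise_ordering_le_sorted_classes Q : sig_sorted ordering_sigs Q ->
  pairwise ordering_le (flatten [seq sort ord_in q | q <- Q]).
Proof.
elim: Q => //= q Q IH [eq_q lt_q sorted_Q]; rewrite pairwise_cat IH // andbT.
apply/andP; split.
  apply/allrelP => x y; rewrite mem_sort (perm_mem (perm_flatten_sort _ _)) => xq yQ.
  by rewrite /ordering_le lt_q.
have: pairwise ord_in (sort ord_in q).
  by rewrite -sorted_pairwise ?sort_sorted // => [a b|a b c]; [exact: leq_total | exact: leq_trans].
apply: (@sub_in_pairwise _ (mem q)); last by apply/allP => x; rewrite mem_sort.
by move=> x y xq yq le_xy; apply/orP; right; rewrite eq_q.
Qed.

Lemma index_ordering_tau_le x y : x != s -> y != s -> x != y ->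
  (index x (ordering_tau e s rho bfs) <= index y (ordering_tau e s rho bfs)) =
  ordering_le y x.
Proof.
move=> xs ys xy; rewrite /ordering_tau -/beta ordering_partitionE.
set L := flatten _; set tau := rev _.
have perm_L : perm_eq L (enum V).
  apply: perm_trans (perm_flatten_sort _ _) _.
  by apply: perm_trans (perm_foldl_refine _ _) _; rewrite /= cats0.
have uniq_L : uniq L by rewrite (perm_uniq perm_L) enum_uniq.
have mem_tau z : z \in tau.
  by rewrite mem_rev inE mem_rem_uniq // inE (perm_mem perm_L) mem_enum; case: eqP.
have pw_L : pairwise ordering_le L.
  apply: pairwise_ordering_le_sorted_classes.
  exact: (sig_sorted_foldl_refine (Ss := [::])).
have pw_tau : pairwise (fun a b => (b == s) || ordering_le b a) tau.
  rewrite pairwise_rev /= eqxx; apply/andP; split; first exact/allP.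
  by apply: sub_pairwise (subseq_pairwise (rem_subseq s L) pw_L) => a b ->; rewrite orbT.
have [lt_xy|lt_yx|eq_xy] := ltngtP (index x tau) (index y tau).
- by have := pairwise_index pw_tau (mem_tau x) (mem_tau y) lt_xy; rewrite (negbTE ys).
- have := pairwise_index pw_tau (mem_tau y) (mem_tau x) lt_yx; rewrite (negbTE xs) /=.
  by move=> le_xy; apply/esym/negP => /(ordering_le_anti le_xy) /eqP; rewrite (negbTE xy).
- by move: eq_xy => /(congr1 (nth s tau)); rewrite !nth_index // => /eqP; rewrite (negbTE xy).
Qed.

Definition earlier_nbr v x := e v x && (index v bfs < index x bfs).

Hypothesis bfs_uniq : uniq bfs.
Hypothesis bfs_all : forall v, v \in bfs.

Lemma sig_lt_ordering_sigsP x y :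
  sig_lt ordering_sigs x y <->
  exists v, [/\ earlier_nbr v x, ~~ earlier_nbr v y &
    forall v', index v bfs < index v' bfs -> earlier_nbr v' x = earlier_nbr v' y].
Proof.
have revE a b : (index a beta < index b beta) = (index b bfs < index a bfs).
  exact: index_rev_ltE.
rewrite sig_lt_mapP /earlier_nbr /=; split=> [[v [_]]|[v []]]; rewrite ?revE.
  move=> vx vy agree; exists v; split=> // v' vv'.
  by have := agree v'; rewrite mem_rev bfs_all !revE vv' => /(_ isT isT).
move=> vx vy agree; exists v; split; rewrite ?mem_rev ?revE //.
by move=> v' _; rewrite !revE; apply: agree.
Qed.

End OrderingTau.

Section VertexOrder.
Variables (V : finType) (rho : seq V).
Hypothesis vo : vertex_order rho.

Lemma vo_mem v : v \in rho.
Proof. by case/andP: vo => _ /allP; apply; rewrite mem_enum. Qed.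

Lemma vo_uniq : uniq rho.
Proof. by case/andP: vo. Qed.

Lemma vo_index_lt v : index v rho < size rho.
Proof. by rewrite index_mem vo_mem. Qed.

Lemma vo_nth_index x0 v : nth x0 rho (index v rho) = v.
Proof. by rewrite nth_index ?vo_mem. Qed.

Lemma vo_index_nth x0 k : k < size rho -> index (nth x0 rho k) rho = k.
Proof. by move=> k_lt; rewrite index_uniq ?vo_uniq. Qed.

Lemma vo_index_inj v w : index v rho = index w rho -> v = w.
Proof. by move=> E; rewrite -(vo_nth_index v v) E vo_nth_index. Qed.

Lemma vo_in_take w i : (w \in take i rho) = (index w rho < i).
Proof. by rewrite in_take ?vo_mem. Qed.

Lemma vo_in_drop w i : (w \in drop i rho) = (i <= index w rho).
Proof.
have := vo_uniq; rewrite -{1}(cat_take_drop i rho) cat_uniq => /and3P[_ /hasPn disj _].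
have : w \in take i rho ++ drop i rho by rewrite cat_take_drop vo_mem.
rewrite mem_cat vo_in_take; case: ltnP => [wi _|_ //].
by apply/negbTE/negP => /disj; rewrite vo_in_take wi.
Qed.

End VertexOrder.

Definition lexdfs_step (V : finType) (e : rel V) (s : V) (rho : seq V) i :=
  forall w, w \in drop i rho ->
    lex_le (lexdfs_label e s rho i w) (lexdfs_label e s rho i (nth s rho i)).

Section RootedOrder.
Variables (V : finType) (e : rel V) (s : V) (rho : seq V).
Hypothesis vo : vertex_order rho.
Hypothesis rho_head : head s rho = s.

Lemma vo_index_root : index s rho = 0.
Proof. by case: rho rho_head (vo_mem vo s) => //= a l ->; rewrite eqxx. Qed.

Lemma vo_index_gt0 v : (0 < index v rho) = (v != s).
Proof.
have [->|vs] := eqVneq v s; first by rewrite vo_index_root.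
by rewrite lt0n; apply: contra_neq vs => E; apply: (vo_index_inj vo); rewrite E vo_index_root.
Qed.

Definition lpar v := last v (earlier_nbrs e rho v).

Lemma lpar_root : lpar s = s.
Proof. by rewrite /lpar /earlier_nbrs vo_index_root take0. Qed.

Lemma lpar_lt v : earlier_nbrs e rho v != [::] ->
  index (lpar v) rho < index v rho /\ e (lpar v) v.
Proof.
rewrite /lpar; case E: (earlier_nbrs e rho v) => [//|a l] _.
have : last v (a :: l) \in earlier_nbrs e rho v by rewrite E /= mem_last.
by rewrite mem_filter (vo_in_take vo) => /andP[-> ->].
Qed.

Section LTreeOf.
Variable t : rel V.
Hypothesis t_ltree : ltree_of e rho t.

Lemma ltree_of_earlier_nbrs v : v != s -> earlier_nbrs e rho v != [::].
Proof.
move=> vs; case: t_ltree => ne _; apply: ne.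
by case: rho rho_head (vo_mem vo v) => //= a l ->; rewrite inE (negbTE vs).
Qed.

Lemma ltree_of_lpar_lt v : v != s -> index (lpar v) rho < index v rho /\ e (lpar v) v.
Proof. by move/ltree_of_earlier_nbrs/lpar_lt. Qed.

Lemma ltree_ofE x y : t x y = ((y != s) && (x == lpar y)) || ((x != s) && (y == lpar x)).
Proof.
have lparentE v q : lparent e rho v q = (v != s) && (q == lpar v).
  have [->|vs] := eqVneq v s; first by rewrite /lparent /earlier_nbrs vo_index_root take0.
  move: (ltree_of_earlier_nbrs vs); rewrite /lparent /lpar /=.
  by case: (earlier_nbrs e rho v).
by case: t_ltree => _ ->; rewrite /ltree_rel !lparentE.
Qed.

End LTreeOf.

Lemma lexdfs_labelE i w : w != s ->
  lexdfs_label e s rho i w = nbr_label (fun j => e (nth s rho j) w) i.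
Proof. by move=> ws; rewrite /lexdfs_label (negbTE ws) cats0. Qed.

Lemma lexdfs_step_lpar i m z :
  0 < i < size rho -> lexdfs_step e s rho i ->
  m < i -> e (nth s rho m) z -> i <= index z rho ->
  (forall l w, m < l < i -> i <= index w rho -> ~~ e (nth s rho l) w) ->
  e (nth s rho m) (nth s rho i) /\ lpar (nth s rho i) = nth s rho m.
Proof.
move=> /andP[i0 isz] step mi e_mz iz no_nbr.
have index_i : index (nth s rho i) rho = i by rewrite (vo_index_nth vo).
have [zs ns] : z != s /\ nth s rho i != s.
  by rewrite -!vo_index_gt0 index_i i0 (leq_trans i0 iz).
have e_mi : e (nth s rho m) (nth s rho i).
  apply/negPn/negP => not_e_mi; have := step z; rewrite (vo_in_drop vo) => /(_ iz).
  rewrite !lexdfs_labelE // lex_le_nbr_label; apply; exists m; split=> // l li.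
  by rewrite (negbTE (no_nbr _ _ li iz)) (negbTE (no_nbr _ _ li _)) ?index_i.
split=> //; rewrite /lpar /earlier_nbrs index_i.
have nth_take k : k < i -> nth (nth s rho i) (take i rho) k = nth s rho k.
  by move=> ki; rewrite nth_take // (set_nth_default s) // (ltn_trans ki isz).
rewrite (@last_filter_nth _ _ _ _ m) ?size_take ?isz ?nth_take //.
move=> k /andP[mk ki]; rewrite nth_take //.
by apply: no_nbr; rewrite ?mk ?index_i.
Qed.

End RootedOrder.

Lemma lexdfs_order_head (V : finType) (e : rel V) (s : V) (tau : seq V) :
  lexdfs_order e s tau -> head s tau = s.
Proof.
case=> vo step; have tau0 : 0 < size tau by have := vo_index_lt vo s; lia.
have := step 0 tau0 s; rewrite drop0 (vo_mem vo) /lexdfs_label /= eqxx => /(_ isT).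
by rewrite -nth0; case: eqP.
Qed.

Lemma ltree_of_lpar_eq (V : finType) (e t : rel V) (s : V) (rho1 rho2 : seq V) :
  vertex_order rho1 -> head s rho1 = s -> ltree_of e rho1 t ->
  vertex_order rho2 -> head s rho2 = s -> ltree_of e rho2 t ->
  lpar e rho1 =1 lpar e rho2.
Proof.
move=> vo1 hd1 lt1 vo2 hd2 lt2 v.
suff lpar_below n w : index w rho1 < n -> lpar e rho1 w = lpar e rho2 w by exact: lpar_below.
elim: n w => // n IH w wn; have [->|ws] := eqVneq w s; first by rewrite !lpar_root.
have [lt_w _] := ltree_of_lpar_lt vo1 hd1 lt1 ws.
have := ltree_ofE vo1 hd1 lt1 (lpar e rho1 w) w; rewrite ws eqxx /=.
rewrite (ltree_ofE vo2 hd2 lt2) ws /= => /orP[/eqP //|/andP[pws /eqP w_eq]].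
have [] := ltree_of_lpar_lt vo1 hd1 lt1 pws.
by rewrite IH ?(leq_trans lt_w) // -w_eq; lia.
Qed.

Lemma bfs_order_nbr_before (V : finType) (h : rel V) (s : V) (beta : seq V) i :
  bfs_order h s beta -> 0 < i < size beta ->
  exists2 j, j < i & h (nth s beta j) (nth s beta i).
Proof. by case=> _ _ bfs_step /bfs_step [ji h_ji]; eexists; [exact: ji | exact: h_ji]. Qed.

Section Ancestors.
Variables (V : finType) (p : V -> V) (s : V).
Hypothesis p_root : p s = s.

Definition ancestor x y := exists k, iter k p y = x.

Lemma ancestor_refl x : ancestor x x.
Proof. by exists 0. Qed.

Lemma ancestor_par x : ancestor (p x) x.
Proof. by exists 1. Qed.

Lemma ancestor_trans x y z : ancestor x y -> ancestor y z -> ancestor x z.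
Proof. by move=> [k <-] [l <-]; exists (k + l); rewrite iterD. Qed.

Lemma ancestor_total a b y : ancestor a y -> ancestor b y -> ancestor a b \/ ancestor b a.
Proof.
move=> [k <-] [l <-]; have [kl|lk] := leqP k l.
  by right; exists (l - k); rewrite -iterD subnK.
by left; exists (k - l); rewrite -iterD subnK // ltnW.
Qed.

Lemma iter_par_root k : iter k p s = s.
Proof. by elim: k => //= k ->. Qed.

Lemma ancestor_par_child z c : ancestor z c -> z != c -> ancestor z (p c).
Proof. by case=> [[|k] <-]; rewrite ?eqxx // iterSr; exists k. Qed.

Lemma ex_child_on_path u w : ancestor u w -> u != w ->
  exists c, [/\ p c = u, c != s & ancestor c w].
Proof.
move=> [K E] uw; have exK : exists k, iter k p w == u by exists K; rewrite E.
case: (ex_minnP exK) => [[|k] /eqP ku kmin]; first by rewrite -ku eqxx in uw.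
exists (iter k p w); split; [by rewrite -iterS | | by exists k].
apply/eqP => cs; have := kmin k.
by rewrite -ku iterS cs p_root eqxx ltnn => /(_ isT).
Qed.

Section AncestorOrder.
Variable rho : seq V.
Hypothesis par_before : forall y, y != s -> index (p y) rho < index y rho.

Lemma index_par_le y : index (p y) rho <= index y rho.
Proof. by have [->|/par_before/ltnW] := eqVneq y s; rewrite ?p_root. Qed.

Lemma ancestor_index_le x y : ancestor x y -> index x rho <= index y rho.
Proof.
by case=> k <-; elim: k => //= k IH; apply: leq_trans (index_par_le _) IH.
Qed.

Lemma ancestor_index_lt x y : ancestor x y -> x != y -> index x rho < index y rho.
Proof.
case=> [[|k] <-]; rewrite ?eqxx // iterSr => ne.
have [ys|ys] := eqVneq y s; first by rewrite ys p_root iter_par_root eqxx in ne.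
by apply: leq_trans (par_before ys); rewrite ltnS; apply: ancestor_index_le; exists k.
Qed.

Lemma root_ancestor y : ancestor s y.
Proof.
suff anc_below n z : index z rho < n -> ancestor s z by exact: anc_below _ _ (ltnSn _).
elim: n z => // n IH z zn; have [->|zs] := eqVneq z s; first exact: ancestor_refl.
by apply: ancestor_trans (ancestor_par z); apply: IH; apply: leq_trans (par_before zs) zn.
Qed.

Lemma ancestor_path_crossing i a w :
  ancestor a w -> index a rho < i -> i <= index w rho ->
  exists x, [/\ ancestor a (p x), ancestor x w, i <= index x rho,
                index (p x) rho < i & x != s].
Proof.
move=> [K aK] ai iw.
have [k [kK not_k_lt k1_lt]] :
    exists k, [/\ k < K, ~~ (index (iter k p w) rho < i) & index (iter k.+1 p w) rho < i].
  apply: (ex_switch (P := fun k => index (iter k p w) rho < i)) => /=.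
    by rewrite -leqNgt.
  by rewrite aK.
exists (iter k p w); split; rewrite -?iterS //.
- by exists (K - k.+1); rewrite -iterD subnK.
- by exists k.
- by rewrite leqNgt.
- by apply: contraNneq not_k_lt => E; move: k1_lt; rewrite iterS E p_root.
Qed.

End AncestorOrder.

End Ancestors.

Lemma eq_ancestor (V : finType) (p1 p2 : V -> V) x y :
  p1 =1 p2 -> ancestor p1 x y <-> ancestor p2 x y.
Proof. by move=> p12; split=> -[k <-]; exists k; rewrite (eq_iter p12). Qed.

Section LexDFSTreeIsNormal.
Variables (V : finType) (e : rel V) (s : V) (tau : seq V).
Hypothesis e_sym : symmetric e.
Hypothesis e_irr : irreflexive e.
Hypothesis e_conn : connected_graph e.
Hypothesis tau_lexdfs : lexdfs_order e s tau.

Let vo : vertex_order tau := tau_lexdfs.1.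
Let tau_head : head s tau = s := lexdfs_order_head tau_lexdfs.
Local Notation p := (lpar e tau).

Definition active b a := has (fun z => e (nth s tau a) z && (b <= index z tau)) (enum V).

Lemma activeW b b' a : b <= b' -> active b' a -> active b a.
Proof.
move=> bb' /hasP[z zV /andP[e_az b'z]]; apply/hasP; exists z => //.
by rewrite e_az (leq_trans bb' b'z).
Qed.

Lemma ex_active b : 0 < b < size tau -> exists2 a, a < b & active b a.
Proof.
move=> /andP[b0 bsz]; have /connectP[pth e_pth last_pth] := e_conn s (nth s tau b).
have s_in : index s tau < b by rewrite (vo_index_root vo tau_head).
have b_out : ~~ (index (last s pth) tau < b) by rewrite -last_pth (vo_index_nth vo) // ltnn.
have [u [v [ub vb e_uv]]] := path_exit_edge (P := fun x => index x tau < b) s_in b_out e_pth.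
exists (index u tau) => //; apply/hasP; exists v; first exact: mem_enum.
by rewrite (vo_nth_index vo) e_uv leqNgt.
Qed.

Lemma lpar_last_active b : 0 < b < size tau -> exists m,
  [/\ m < b, active b m, forall l, m < l < b -> ~~ active b l & p (nth s tau b) = nth s tau m].
Proof.
move=> b_range; have [m [mb act_m last_m]] := ex_last_below (ex_active b_range).
exists m; split=> //; have /hasP[z _ /andP[e_mz bz]] := act_m.
have no_nbr l w : m < l < b -> b <= index w tau -> ~~ e (nth s tau l) w.
  by move=> lb bw; move: (last_m l lb) => /hasPn /(_ w (mem_enum _ _)); rewrite bw andbT.
have step_b := tau_lexdfs.2 b (proj2 (andP b_range)).
by have [] := lexdfs_step_lpar vo tau_head b_range step_b mb e_mz bz no_nbr.
Qed.

Lemma lexdfs_lpar_lt v : v != s -> index (p v) tau < index v tau.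
Proof.
move=> vs; have b_range : 0 < index v tau < size tau.
  by rewrite (vo_index_gt0 vo tau_head) vs vo_index_lt.
have [m [mb _ _]] := lpar_last_active b_range.
by rewrite (vo_nth_index vo) => ->; rewrite (vo_index_nth vo) // (ltn_trans mb) ?vo_index_lt.
Qed.

Lemma lexdfs_lpar_root : p s = s.
Proof. exact: lpar_root vo tau_head. Qed.

Lemma active_ancestor_step b a :
  (forall a', a' < b -> active b a' -> ancestor p (nth s tau a') (nth s tau b.-1)) ->
  0 < b < size tau -> a < b -> active b a -> ancestor p (nth s tau a) (nth s tau b).
Proof.
move=> IH b_range ab act_a; have [m [mb act_m last_m p_b]] := lpar_last_active b_range.
have am : a <= m by rewrite leqNgt; apply: contraL act_a => ma; apply: last_m; rewrite ma.
apply: (ancestor_trans (y := nth s tau m)); last by rewrite -p_b; exact: ancestor_par.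
have bsz : b < size tau by case/andP: b_range.
have [//|anc_ma] := ancestor_total (IH a ab act_a) (IH m mb act_m).
have := ancestor_index_le lexdfs_lpar_root lexdfs_lpar_lt anc_ma.
rewrite !(vo_index_nth vo) ?(ltn_trans _ bsz) // => ma.
have -> : a = m by apply/eqP; rewrite eqn_leq am ma.
exact: ancestor_refl.
Qed.

Lemma active_ancestor_prev b a :
  b < size tau -> a <= b -> active b.+1 a -> ancestor p (nth s tau a) (nth s tau b).
Proof.
elim: b a => [|b IH] a bsz ab act_a.
  by rewrite leqn0 in ab; rewrite (eqP ab); exact: ancestor_refl.
have [->|ne] := eqVneq a b.+1; first exact: ancestor_refl.
apply: active_ancestor_step; rewrite ?bsz //; last exact: activeW act_a.
- by move=> a' a'b act_a'; apply: IH => //; apply: ltnW.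
- by rewrite ltn_neqAle ne ab.
Qed.

Lemma lexdfs_edge_ancestor x y : e x y -> ancestor p x y \/ ancestor p y x.
Proof.
wlog lt_xy : x y / index x tau < index y tau.
  move=> wlog_lt e_xy; case: (ltngtP (index x tau) (index y tau)) => [||/(vo_index_inj vo) xy].
  - by move/wlog_lt; apply.
  - by move/wlog_lt; rewrite e_sym => /(_ e_xy) [anc|anc]; [right|left].
  - by rewrite xy e_irr in e_xy.
move=> e_xy; left.
have act_x : active (index y tau) (index x tau).
  by apply/hasP; exists y; rewrite ?mem_enum // (vo_nth_index vo) e_xy leqnn.
have := active_ancestor_step _ _ lt_xy act_x; rewrite !(vo_nth_index vo); apply.
- move=> a; case E: (index y tau) => [//|b] ab act_a.
  apply: active_ancestor_prev => //.
  by apply: ltnW; rewrite -E vo_index_lt.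
- by rewrite (vo_index_lt vo) andbT (leq_ltn_trans _ lt_xy).
Qed.

End LexDFSTreeIsNormal.

Section NormalTree.
Variables (V : finType) (e : rel V) (s : V) (p : V -> V).
Hypothesis p_root : p s = s.
Hypothesis e_ancestral : forall x y, e x y -> ancestor p x y \/ ancestor p y x.

Definition path_beats u x y := exists v, [/\ ancestor p v u, e v x, ~~ e v y &
  forall v', ancestor p v' u -> ancestor p v v' -> v != v' -> e v' x = e v' y].

Variable rho : seq V.
Hypothesis vo : vertex_order rho.
Hypothesis par_before : forall y, y != s -> index (p y) rho < index y rho.

Let anc_le := ancestor_index_le p_root par_before.
Let anc_lt := ancestor_index_lt p_root par_before.

Lemma nbr_ancestor_par i c x k : c != s -> ancestor p c x -> i <= index c rho ->
  k < i -> e (nth s rho k) x -> ancestor p (nth s rho k) (p c).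
Proof.
move=> cs anc_cx ic ki e_kx.
have ksz : k < size rho by apply: leq_trans (ltnW (vo_index_lt vo c)); apply: leq_trans ic.
have index_k : index (nth s rho k) rho = k by rewrite (vo_index_nth vo).
have [anc_kx|anc_xk] := e_ancestral e_kx; last first.
  by have := anc_le anc_xk; have := anc_le anc_cx; rewrite index_k; lia.
have [anc_kc|anc_ck] := ancestor_total anc_kx anc_cx; last first.
  by have := anc_le anc_ck; rewrite index_k; lia.
apply: ancestor_par_child anc_kc _.
by apply: contraTneq ic => <-; rewrite index_k -ltnNge.
Qed.

Lemma last_diff_path_beats i c c' x y :
  c != s -> c' != s -> p c = p c' -> ancestor p c x -> ancestor p c' y ->
  index (p c) rho < i -> i <= index c rho -> i <= index c' rho ->
  last_diff (fun j => e (nth s rho j) x) (fun j => e (nth s rho j) y) i <->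
  path_beats (p c) x y.
Proof.
move=> cs c's pcc' anc_cx anc_c'y ui ic ic'.
have isz : i <= size rho by apply: leq_trans ic (ltnW (vo_index_lt vo c)).
have before_i v : ancestor p v (p c) -> index v rho < i.
  by move/anc_le => vu; apply: leq_ltn_trans vu ui.
have nbr_x k : k < i -> e (nth s rho k) x -> ancestor p (nth s rho k) (p c).
  exact: (nbr_ancestor_par cs anc_cx ic).
have nbr_y k : k < i -> e (nth s rho k) y -> ancestor p (nth s rho k) (p c).
  by rewrite pcc'; exact: (nbr_ancestor_par c's anc_c'y ic').
split=> [[k [ki e_kx e_ky agree]]|[v [anc_vu e_vx e_vy agree]]].
  exists (nth s rho k); split=> [|//|//|v' anc_v'u anc_kv' ne]; first exact: nbr_x.
  have := anc_lt anc_kv' ne; rewrite (vo_index_nth vo) ?(leq_trans ki isz) // => kv'.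
  by rewrite -(vo_nth_index vo s v'); apply: agree; rewrite kv' before_i.
exists (index v rho); rewrite (vo_nth_index vo); split=> //; first exact: before_i.
move=> l /andP[vl li]; set w := nth s rho l.
have index_w : index w rho = l by rewrite (vo_index_nth vo) // (leq_trans li isz).
suff agree_w : ancestor p w (p c) -> e w x = e w y.
  case E: (e w x); case E': (e w y) => //.
  - by have := agree_w (nbr_x l li E); rewrite E E'.
  - by have := agree_w (nbr_y l li E'); rewrite E E'.
move=> anc_wu; have [anc_vw|anc_wv] := ancestor_total anc_vu anc_wu.
  by apply: agree => //; apply: contraTneq vl => ->; rewrite index_w ltnn.
by have := anc_le anc_wv; rewrite index_w; lia.
Qed.

End NormalTree.

Definition dfs_plus_step (V : finType) (h : rel V) (tau pi : seq V) (x0 : V) i :=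
  let unvisited_nbr u w := h u w && (w \notin take i pi) in
  exists2 j, j < i &
    [/\ has (unvisited_nbr (nth x0 pi j)) (enum V),
        forall k, j < k < i -> ~~ has (unvisited_nbr (nth x0 pi k)) (enum V),
        unvisited_nbr (nth x0 pi j) (nth x0 pi i) &
        forall w, unvisited_nbr (nth x0 pi j) w -> index w tau <= index (nth x0 pi i) tau].

Lemma dfs_plus_step_default (V : finType) (h : rel V) (tau pi : seq V) x0 y0 i :
  i < size pi -> dfs_plus_step h tau pi x0 i -> dfs_plus_step h tau pi y0 i.
Proof.
move=> isz [j ji [act_j last_j unv_ji max_j]].
have nthE k : k <= i -> nth x0 pi k = nth y0 pi k by move=> ki; apply: set_nth_default; lia.
exists j => //; rewrite -!nthE ?(ltnW ji) //; split=> // k /andP[jk ki].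
by rewrite -nthE ?(ltnW ki) //; apply: last_j; rewrite jk.
Qed.

Section OrderingOutput.
Variables (V : finType) (e t : rel V) (s : V) (sigma tau0 bfs : seq V).
Hypothesis e_sym : symmetric e.
Hypothesis e_irr : irreflexive e.
Hypothesis e_conn : connected_graph e.
Hypothesis sigma_vo : vertex_order sigma.
Hypothesis sigma_head : head s sigma = s.
Hypothesis sigma_ltree : ltree_of e sigma t.
Hypothesis tau0_lexdfs : lexdfs_order e s tau0.
Hypothesis tau0_ltree : ltree_of e tau0 t.
Hypothesis bfs_t : bfs_order t s bfs.

Local Notation p := (lpar e sigma).
Let p_root : p s = s := lpar_root e sigma_vo sigma_head.
Let tau0_vo : vertex_order tau0 := tau0_lexdfs.1.
Let tau0_head : head s tau0 = s := lexdfs_order_head tau0_lexdfs.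
Let bfs_vo : vertex_order bfs. Proof. by case: bfs_t. Qed.
Let bfs_head : head s bfs = s. Proof. by case: bfs_t. Qed.

Lemma lpar_tau0 : lpar e tau0 =1 p.
Proof. exact: ltree_of_lpar_eq tau0_vo tau0_head tau0_ltree sigma_vo sigma_head sigma_ltree. Qed.

Lemma t_lparE x y : t x y = ((y != s) && (x == p y)) || ((x != s) && (y == p x)).
Proof. exact: (ltree_ofE sigma_vo sigma_head sigma_ltree x y). Qed.

Lemma par_before_sigma y : y != s -> index (p y) sigma < index y sigma.
Proof. by case/(ltree_of_lpar_lt sigma_vo sigma_head sigma_ltree). Qed.

Lemma par_before_tau0 y : y != s -> index (p y) tau0 < index y tau0.
Proof. by move=> ys; rewrite -lpar_tau0; exact: (lexdfs_lpar_lt e_conn tau0_lexdfs ys). Qed.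

Lemma par_before_bfs y : y != s -> index (p y) bfs < index y bfs.
Proof.
suff par_below n z : index z bfs < n -> z != s -> index (p z) bfs < index z bfs.
  exact: par_below.
elim: n z => // n IH z zn zs; set i := index z bfs.
have i_range : 0 < i < size bfs by rewrite (vo_index_gt0 bfs_vo bfs_head) zs vo_index_lt.
have [j ji] := bfs_order_nbr_before bfs_t i_range.
have index_j : index (nth s bfs j) bfs = j.
  by rewrite (vo_index_nth bfs_vo) // (ltn_trans ji); case/andP: i_range.
rewrite /i (vo_nth_index bfs_vo) t_lparE zs /= => /orP[/eqP <-|/andP[js /eqP z_eq]].
  by rewrite index_j.
have jn : index (nth s bfs j) bfs < n by rewrite index_j (leq_trans ji zn).
by have := IH _ jn js; rewrite index_j -z_eq -/i; lia.
Qed.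

Lemma e_ancestral x y : e x y -> ancestor p x y \/ ancestor p y x.
Proof.
by move/(lexdfs_edge_ancestor e_sym e_irr e_conn tau0_lexdfs); rewrite !(eq_ancestor _ _ lpar_tau0).
Qed.

Let anc_le := ancestor_index_le p_root par_before_sigma.
Let last_diff_sigma := last_diff_path_beats p_root e_ancestral sigma_vo par_before_sigma.

Lemma lexdfs_label_le_child i c w :
  c != s -> ancestor p c w -> index (p c) sigma < i -> i <= index c sigma ->
  lex_le (lexdfs_label e s sigma i w) (lexdfs_label e s sigma i c).
Proof.
move=> cs anc_cw ui ic; have [->|wc] := eqVneq w c; first exact: lex_le_refl.
have ws : w != s by rewrite -(vo_index_gt0 sigma_vo sigma_head); have := anc_le anc_cw; lia.
have := tau0_lexdfs.2 (index c tau0) (vo_index_lt tau0_vo c) w.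
rewrite (vo_in_drop tau0_vo) (ancestor_index_le p_root par_before_tau0 anc_cw).
rewrite (vo_nth_index tau0_vo) !lexdfs_labelE // !lex_le_nbr_label => /(_ isT).
apply: contra_not => /(last_diff_sigma cs cs erefl anc_cw (ancestor_refl _ c) ui ic ic).
by move/(last_diff_path_beats p_root e_ancestral tau0_vo par_before_tau0 cs cs erefl anc_cw
  (ancestor_refl _ c) (par_before_tau0 cs) (leqnn _) (leqnn _)).
Qed.

Let anc_le_bfs := ancestor_index_le p_root par_before_bfs.

Lemma earlier_nbr_child v c : c != s ->
  earlier_nbr e bfs v c <-> ancestor p v (p c) /\ e v c.
Proof.
move=> cs; split=> [/andP[e_vc vc]|[anc_vu e_vc]].
  split=> //; have [anc_vc|anc_cv] := e_ancestral e_vc.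
    by apply: ancestor_par_child anc_vc _; apply: contraTneq e_vc => ->; rewrite e_irr.
  by have := anc_le_bfs anc_cv; lia.
by rewrite /earlier_nbr e_vc (leq_ltn_trans (anc_le_bfs anc_vu) (par_before_bfs cs)).
Qed.

Lemma sig_lt_siblings c c' : c != s -> c' != s -> p c = p c' ->
  sig_lt (ordering_sigs e bfs) c c' <-> path_beats e p (p c) c c'.
Proof.
move=> cs c's pcc'.
have bfs_uniq : uniq bfs := vo_uniq bfs_vo.
rewrite (sig_lt_ordering_sigsP _ bfs_uniq (vo_mem bfs_vo)).
have nbrE v' x : x != s -> p x = p c -> ancestor p v' (p c) -> earlier_nbr e bfs v' x = e v' x.
  move=> xs pxc anc_v'u; apply/idP/idP => [/andP[] //|e_v'x].
  by apply/(earlier_nbr_child _ xs); rewrite pxc.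
split=> [[v [/(earlier_nbr_child _ cs) [anc_vu e_vc] not_v_c' agree]]|].
  exists v; split=> // [|v' anc_v'u anc_vv' ne].
    by apply: contra not_v_c' => e_vc'; apply/(earlier_nbr_child _ c's); rewrite -pcc'.
  have := agree v'; rewrite !nbrE //; apply.
  exact: (ancestor_index_lt p_root par_before_bfs anc_vv' ne).
case=> v [anc_vu e_vc not_e_vc' agree]; exists v; split.
- exact/(earlier_nbr_child _ cs).
- by apply: contra not_e_vc' => /(earlier_nbr_child _ c's) [].
have imp x y : x != s -> y != s -> p x = p c -> p y = p c ->
    (forall v', ancestor p v' (p c) -> ancestor p v v' -> v != v' -> e v' x = e v' y) ->
    forall v', index v bfs < index v' bfs -> earlier_nbr e bfs v' x -> earlier_nbr e bfs v' y.
  move=> xs ys pxc pyc agree_xy v' vv' /(earlier_nbr_child _ xs) [anc_v'u e_v'x].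
  rewrite pxc in anc_v'u; rewrite nbrE // -agree_xy //.
    have [] := ancestor_total anc_vu anc_v'u => // anc_v'v.
    by have := anc_le_bfs anc_v'v; lia.
  by apply: contraTneq vv' => ->; rewrite ltnn.
move=> v' vv'; apply/idP/idP; apply: imp; rewrite -?pcc' // => v'' anc_v''u anc_vv'' ne.
by rewrite agree.
Qed.

Let tau := ordering_tau e s (rev sigma) bfs.

Lemma index_tau_le_siblings i c c' :
  c != s -> c' != s -> p c = p c' -> index (p c) sigma < i ->
  i <= index c sigma -> index c' sigma = i ->
  index c tau <= index c' tau <->
  lex_le (lexdfs_label e s sigma i c) (lexdfs_label e s sigma i c').
Proof.
move=> cs c's pcc' ui ic ic'; have [<-|cc'] := eqVneq c c'; first by rewrite leqnn lex_le_refl.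
have rev_sigma_all v : v \in rev sigma by rewrite mem_rev (vo_mem sigma_vo).
rewrite index_ordering_tau_le // /ordering_le revK ic' ic andbT sig_leNlt.
rewrite !lexdfs_labelE // lex_le_nbr_label -(rwP negP) sig_lt_siblings //.
by rewrite (last_diff_sigma cs c's pcc' (ancestor_refl _ _) (ancestor_refl _ _)) ?ic'.
Qed.

Definition tree_active i a :=
  has (fun w => t (nth s sigma a) w && (w \notin take i sigma)) (enum V).

Lemma tree_active_par i c : i <= index c sigma -> c != s -> index (p c) sigma < i ->
  tree_active i (index (p c) sigma).
Proof.
move=> ic cs pci; apply/hasP; exists c; rewrite ?mem_enum //.
by rewrite (vo_nth_index sigma_vo) t_lparE cs eqxx (vo_in_take sigma_vo) -leqNgt.
Qed.

Lemma ex_tree_active i : 0 < i < size sigma -> exists2 a, a < i & tree_active i a.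
Proof.
move=> /andP[i0 isz].
have [||x [_ _ ix pxi xs]] := ancestor_path_crossing p_root (rho := sigma) (i := i)
  (root_ancestor par_before_sigma (nth s sigma i)).
- by rewrite (vo_index_root sigma_vo sigma_head).
- by rewrite (vo_index_nth sigma_vo).
by exists (index (p x) sigma) => //; apply: tree_active_par.
Qed.

Lemma tree_child i j w : j < i -> t (nth s sigma j) w -> i <= index w sigma ->
  w != s /\ p w = nth s sigma j.
Proof.
rewrite t_lparE => ji /orP[/andP[ws /eqP ->] //|/andP[js /eqP w_eq]] iw.
have := par_before_sigma js; rewrite -w_eq (vo_index_nth sigma_vo); first lia.
by apply: ltn_trans ji (leq_ltn_trans iw (vo_index_lt sigma_vo w)).
Qed.

Lemma no_nbr_after_last_active i j : j < i -> (forall k, j < k < i -> ~~ tree_active i k) ->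
  forall l w, j < l < i -> i <= index w sigma -> ~~ e (nth s sigma l) w.
Proof.
move=> ji inactive l w /andP[jl li] iw; apply/negP => e_lw.
have lsz : l < size sigma by apply: ltn_trans li (leq_ltn_trans iw (vo_index_lt sigma_vo w)).
have index_l : index (nth s sigma l) sigma = l by rewrite (vo_index_nth sigma_vo).
have [anc_lw|anc_wl] := e_ancestral e_lw; last by have := anc_le anc_wl; lia.
have [|x [anc_lpx _ ix pxi xs]] := ancestor_path_crossing p_root (rho := sigma) anc_lw _ iw.
  by rewrite index_l.
have := inactive (index (p x) sigma); rewrite tree_active_par // pxi andbT.
by have := anc_le anc_lpx; rewrite index_l => lpx; move/(_ (leq_trans jl lpx)).
Qed.

Lemma lexdfs_to_dfs_plus_step i :
  0 < i < size sigma -> lexdfs_step e s sigma i -> dfs_plus_step t tau sigma s i.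
Proof.
move=> i_range step; have /andP[i0 isz] := i_range.
have [j [ji act_j inactive]] := ex_last_below (ex_tree_active i_range).
have [z _ /andP[t_jz]] := hasP act_j; rewrite (vo_in_take sigma_vo) -leqNgt => iz.
have [zs pz] := tree_child ji t_jz iz.
have e_jz : e (nth s sigma j) z.
  by rewrite -pz; case: (ltree_of_lpar_lt sigma_vo sigma_head sigma_ltree zs).
have [_ p_i] := lexdfs_step_lpar sigma_vo sigma_head i_range step ji e_jz iz
  (no_nbr_after_last_active ji inactive).
have i_ns : nth s sigma i != s.
  by rewrite -(vo_index_gt0 sigma_vo sigma_head) (vo_index_nth sigma_vo).
exists j => //; split=> //.
  by rewrite t_lparE i_ns p_i eqxx (vo_in_take sigma_vo) (vo_index_nth sigma_vo) ?ltnn.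
move=> w /andP[t_jw]; rewrite (vo_in_take sigma_vo) -leqNgt => iw.
have [ws pw] := tree_child ji t_jw iw.
have ji' : index (p w) sigma < i by rewrite pw (vo_index_nth sigma_vo) // (ltn_trans ji).
apply/(index_tau_le_siblings ws i_ns _ ji' iw); rewrite ?pw ?p_i ?(vo_index_nth sigma_vo) //.
by apply: step; rewrite (vo_in_drop sigma_vo).
Qed.

Lemma lexdfs_label_le_tau_max i j w :
  i < size sigma -> j < i -> p (nth s sigma i) = nth s sigma j ->
  (forall k, j < k < i -> ~~ tree_active i k) ->
  (forall c, t (nth s sigma j) c && (c \notin take i sigma) ->
     index c tau <= index (nth s sigma i) tau) ->
  ancestor p (nth s sigma j) w -> i <= index w sigma ->
  lex_le (lexdfs_label e s sigma i w) (lexdfs_label e s sigma i (nth s sigma i)).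
Proof.
move=> isz ji p_i inactive tau_max anc_jw iw.
have index_j : index (nth s sigma j) sigma = j by rewrite (vo_index_nth sigma_vo) // (ltn_trans ji).
have index_i : index (nth s sigma i) sigma = i by rewrite (vo_index_nth sigma_vo).
have i_ns : nth s sigma i != s.
  by rewrite -(vo_index_gt0 sigma_vo sigma_head) index_i (leq_ltn_trans _ ji).
have jw : nth s sigma j != w by apply: contraTneq iw => <-; rewrite index_j -ltnNge.
have [c [pc cs anc_cw]] := ex_child_on_path p_root anc_jw jw.
have jc : j < index c sigma by rewrite -index_j -pc par_before_sigma.
have ic : i <= index c sigma.
  rewrite leqNgt; apply/negP => ci.
  have [x [anc_cpx _ ix pxi xs]] := ancestor_path_crossing p_root anc_cw ci iw.
  have := inactive (index (p x) sigma); rewrite tree_active_par // pxi andbT.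
  by move/(_ (leq_trans jc (anc_le anc_cpx))).
have pci : index (p c) sigma < i by rewrite pc index_j.
apply: lex_le_trans (lexdfs_label_le_child cs anc_cw pci ic) _.
apply/(index_tau_le_siblings cs i_ns _ pci ic index_i); first by rewrite pc p_i.
by apply: tau_max; rewrite t_lparE cs pc eqxx (vo_in_take sigma_vo) -leqNgt ic.
Qed.

Lemma dfs_plus_to_lexdfs_step i :
  0 < i < size sigma -> dfs_plus_step t tau sigma s i -> lexdfs_step e s sigma i.
Proof.
move=> /andP[i0 isz] [j ji [_ inactive /andP[t_ji _] tau_max]].
have index_i : index (nth s sigma i) sigma = i by rewrite (vo_index_nth sigma_vo).
have [i_ns p_i] := tree_child ji t_ji (eq_leq (esym index_i)).
move=> w; rewrite (vo_in_drop sigma_vo) => iw.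
have ws : w != s by rewrite -(vo_index_gt0 sigma_vo sigma_head) (leq_trans i0 iw).
have e_ji : e (nth s sigma j) (nth s sigma i).
  by rewrite -p_i; case: (ltree_of_lpar_lt sigma_vo sigma_head sigma_ltree i_ns).
rewrite !lexdfs_labelE // lex_le_nbr_label => -[k [ki e_kw not_e_ki agree]].
have [kj|jk|kj] := ltngtP k j; last by rewrite kj e_ji in not_e_ki.
- have e_jw : e (nth s sigma j) w by rewrite agree ?kj.
  have [anc_jw|anc_wj] := e_ancestral e_jw; last first.
    by have := anc_le anc_wj; rewrite (vo_index_nth sigma_vo) ?(ltn_trans ji); lia.
  have := lexdfs_label_le_tau_max isz ji p_i inactive tau_max anc_jw iw.
  by rewrite !lexdfs_labelE // lex_le_nbr_label; apply; exists k.
- have := no_nbr_after_last_active ji inactive (l := k) (w := w).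
  by rewrite jk ki iw e_kw => /(_ isT isT).
Qed.

End OrderingOutput.

Lemma lexdfs_step0 (V : finType) (e : rel V) (s : V) (sigma : seq V) :
  head s sigma = s -> lexdfs_step e s sigma 0.
Proof. by move=> sigma_head w _; rewrite /lexdfs_label nth0 sigma_head eqxx; case: (w == s). Qed.

Unset Implicit Arguments.

Theorem lemma11 (V : finType) (e : rel V) (t : rel V) (s : V) (sigma : seq V) :
  simple_graph e ->
  connected_graph e ->
  is_lexdfs_ltree e t s ->
  vertex_order sigma ->
  head s sigma = s ->
  ltree_of e sigma t ->
  forall bfs : seq V, bfs_order t s bfs ->
    (ordering_outputs e t s (rev sigma) bfs sigma <-> lexdfs_order e s sigma).
Proof.
move=> [e_sym e_irr] e_conn [tau0 [tau0_lexdfs tau0_ltree]] sigma_vo sigma_head sigma_ltree.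
move=> bfs bfs_t.
have to_lexdfs := dfs_plus_to_lexdfs_step e_sym e_irr e_conn sigma_vo sigma_head sigma_ltree
  tau0_lexdfs tau0_ltree bfs_t.
have to_dfs_plus := lexdfs_to_dfs_plus_step e_sym e_irr e_conn sigma_vo sigma_head sigma_ltree
  tau0_lexdfs tau0_ltree bfs_t.
split=> [[x0 [_ _ dfs_steps]]|[_ lexdfs_steps]].
  split=> // -[|i] i_range; first exact: lexdfs_step0.
  by apply/to_lexdfs/(dfs_plus_step_default (x0 := x0))/dfs_steps.
exists s; split=> //; first by rewrite /ordering_tau rev_cons last_rcons.
move=> i i_range; have isz : i < size sigma by case/andP: i_range.
by apply/to_dfs_plus/lexdfs_steps.
Qed.
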